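(* If $n>2$ is odd, then all eigenvalues of the operator $c_1\star$ of quantum multiplication by the first Chern class acting on the small quantum cohomology $\operatorname{QH}(\operatorname{Gr}(2,n))$ have algebraic multiplicity one.
   Context: $\operatorname{QH}(\operatorname{Gr}(2,n))$ denotes the small quantum cohomology of the complex Grassmannian of 2-planes in $\mathbb{C}^n$ with complex coefficients (quantum parameter specialized to $1$, as in the monotone setting); it has complex dimension $\binom{n}{2}$. *)

From HB Require Import structures.
From mathcomp Require Import all_boot all_order all_algebra algC.
Set Implicit Arguments. Unset Strict Implicit. Unset Printing Implicit Defensive.
Import Order.TTheory GRing.Theory Num.Theory.
Local Open Scope ring_scope.

(* Schubert basis of H^*(Gr(2,n)): partitions (a,b) with n-2 >= a >= b >= 0,
   encoded as pairs (a,b) of ordinals < n-1 with b <= a.  Its cardinality is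
   binomial(n,2). *)
Definition gr2_index (n : nat) : finType :=
  {p : 'I_(n.-1) * 'I_(n.-1) | (p.2 <= p.1)%N}.

(* Quantum Monk/Pieri rule for Gr(2,n), with q = 1: the coefficient of
   sigma_mu in sigma_1 * sigma_lam, where
   sigma_1 * sigma_(a,b) = sigma_(a+1,b) + sigma_(a,b+1)
                           + [a = n-2, b >= 1] q sigma_(b-1,0)
   (terms outside the (n-2)x2 box / non-partitions are omitted, which is
   automatic since mu ranges over the index set). *)
Definition qmonk2 (n : nat) (lam mu : nat * nat) : nat :=
  ((mu == (lam.1.+1, lam.2)) : nat)
  + ((mu == (lam.1, lam.2.+1)) : nat)
  + [&& lam.1 == (n - 2)%N, (0 < lam.2)%N & mu == (lam.2.-1, 0%N)].

Definition idx_pair (n : nat) (i : gr2_index n) : nat * nat :=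
  (nat_of_ord (val i).1, nat_of_ord (val i).2).

(* Matrix of quantum multiplication by sigma_1 on QH(Gr(2,n)) over C
   (algC), in the Schubert basis ordered by enum (gr2_index n);
   column j = image of the j-th basis vector. *)
Definition sigma1_mat (n : nat) : 'M[algC]_#|gr2_index n| :=
  \matrix_(i, j) (qmonk2 n (idx_pair (enum_val j)) (idx_pair (enum_val i)))%:R.

(* c_1(T Gr(2,n)) = n * sigma_1, so c_1 * is n times sigma_1 *. *)
Definition c1_mat (n : nat) : 'M[algC]_#|gr2_index n| :=
  n%:R *: sigma1_mat n.

(* For x, y with x^n = y^n = -1, the alternants
     A(a,b) = x^(a+1) y^b - x^b y^(a+1) = (x - y) s_(a,b)(x, y)
   satisfy the Pieri rule (x + y) A(a,b) = A(a+1,b) + A(a,b+1).  Of the terms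
   leaving the (n-2) x 2 box, A(a,a+1) vanishes and, since x^n = y^n = -1,
   A(n-1,b) equals the quantum correction A(b-1,0).  Hence, for x <> y, the row
   of alternants is a left eigenvector of sigma_1 * with eigenvalue x + y.
   When n is odd, taking x, y among the n distinct n-th roots of -1 yields
   binomial(n,2) eigenvalues of c_1 * = n sigma_1 *, and they are distinct:
   two points of the unit circle with a nonzero sum s are the roots of
   z^2 - s z + s / s^*.  So the characteristic polynomial has as many distinct
   roots as its degree. *)

From HB Require Import structures.
From mathcomp Require Import all_boot all_order all_algebra algC cyclotomic.
From mathcomp Require Import ring zify.
Import Order.TTheory GRing.Theory Num.Theory.
Local Open Scope ring_scope.
Set Implicit Arguments. Unset Strict Implicit.

Lemma pair_eq_of_sum_mul (R : idomainType) (a b c d : R) :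
  a + b = c + d -> a * b = c * d -> (a = c /\ b = d) \/ (a = d /\ b = c).
Proof.
move=> sum_eq mul_eq.
have : (a - c) * (a - d) = a * a - a * (a + b) + a * b by rewrite sum_eq mul_eq; ring.
rewrite [RHS](_ : _ = 0); last by ring.
move/eqP; rewrite mulf_eq0 !subr_eq0 => /orP[] /eqP ac; [left | right].
  by split=> //; apply: (addrI a); rewrite {2}ac.
by split=> //; apply: (addIr a); rewrite addrC {2}ac.
Qed.

Lemma pair_eq_of_sum_norm1 (C : numClosedFieldType) (a b c d : C) :
  `|a| = 1 -> `|b| = 1 -> `|c| = 1 -> `|d| = 1 ->
  a + b != 0 -> a + b = c + d -> (a = c /\ b = d) \/ (a = d /\ b = c).
Proof.
move=> na nb nc nd ab_neq0 sum_eq; apply: pair_eq_of_sum_mul => //.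
have conjV (u : C) : `|u| = 1 -> u^* = u^-1 by rewrite invC_norm => ->; rewrite expr1n invr1 mul1r.
have neq0 (u : C) : `|u| = 1 -> u != 0 by move=> nu; rewrite -normr_gt0 nu ltr01.
have sumV (u v : C) : `|u| = 1 -> `|v| = 1 -> u^-1 + v^-1 = (u + v) * (u * v)^-1.
  by move=> nu nv; field; rewrite !neq0.
have : (a + b) * (a * b)^-1 = (a + b) * (c * d)^-1.
  by rewrite -sumV // [in RHS]sum_eq -sumV // -!conjV // -!rmorphD sum_eq.
by move/(mulfI ab_neq0)/invr_inj.
Qed.

Lemma norm_root_neg1 (C : numClosedFieldType) m (u : C) :
  (0 < m)%N -> u ^+ m = -1 -> `|u| = 1.
Proof. by move=> m_gt0 um; apply/eqP; rewrite -(pexpr_eq1 m_gt0) // -normrX um normrN1. Qed.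

Lemma add_roots_neg1_neq0 (C : numClosedFieldType) m (u v : C) :
  odd m -> u ^+ m = -1 -> v ^+ m = -1 -> u + v != 0.
Proof.
move=> m_odd um vm; apply/negP; rewrite addr_eq0 => /eqP u_eq.
move: um; rewrite u_eq exprNn vm -signr_odd m_odd expr1 mulrN1 opprK => /eqP.
by rewrite -subr_eq0 opprK -mulr2n pnatr_eq0.
Qed.

Lemma pair_eq_of_sum_roots_neg1 (C : numClosedFieldType) m (a b c d : C) :
  odd m -> a ^+ m = -1 -> b ^+ m = -1 -> c ^+ m = -1 -> d ^+ m = -1 ->
  a + b = c + d -> (a = c /\ b = d) \/ (a = d /\ b = c).
Proof.
move=> m_odd am bm cm dm.
have norm1 (u : C) : u ^+ m = -1 -> `|u| = 1 := norm_root_neg1 (odd_gt0 m_odd).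
exact: pair_eq_of_sum_norm1 (norm1 _ am) (norm1 _ bm) (norm1 _ cm) (norm1 _ dm)
  (add_roots_neg1_neq0 m_odd am bm).
Qed.

Lemma prim_root_expr_inj (R : nzRingType) m (z : R) i j :
  m.-primitive_root z -> (i < m)%N -> (j < m)%N -> z ^+ i = z ^+ j -> i = j.
Proof. by move=> z_prim im jm /eqP; rewrite (eq_prim_root_expr z_prim) !modn_small // => /eqP. Qed.

Lemma neg_prim_root_expr (R : nzRingType) m (z : R) k :
  odd m -> m.-primitive_root z -> (- z ^+ k) ^+ m = -1.
Proof.
move=> m_odd z_prim.
by rewrite exprNn -signr_odd m_odd mulN1r -exprM mulnC exprM (prim_expr_order z_prim) expr1n.
Qed.

Lemma mup_eq1_uniq_roots (F : fieldType) (p : {poly F}) (rs : seq F) :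
  p \is monic -> size p = (size rs).+1 -> uniq rs -> all (root p) rs ->
  forall a, root p a -> mup a p = 1%N.
Proof.
move=> p_monic p_size rs_uniq rs_roots a.
have -> : p = \prod_(r <- rs) ('X - r%:P).
  by rewrite {1}(all_roots_prod_XsubC p_size rs_roots) ?uniq_rootsE // (monicP p_monic) scale1r.
by rewrite mu_prod_XsubC root_prod_XsubC count_uniq_mem // => ->.
Qed.

Section AlternantEigenvector.
Variable n : nat.
Hypothesis n_gt1 : (1 < n)%N.

Definition in_box (t : nat * nat) := (t.1 < n.-1)%N && (t.2 <= t.1)%N.

Lemma idx_pair_in_box (p : gr2_index n) : in_box (idx_pair p).
Proof. by case: p => [[a b] /= le_ba]; rewrite /in_box /idx_pair /= ltn_ord. Qed.

Lemma idx_pair_inj : injective (@idx_pair n).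
Proof.
move=> [[a b] ?] [[c d] ?]; rewrite /idx_pair /= => -[ac bd].
by apply: val_inj; congr pair; apply: val_inj.
Qed.

Lemma sum_idx_pair_delta (R : pzSemiRingType) (F : nat * nat -> R) t :
  \sum_(p : gr2_index n) F (idx_pair p) * ((idx_pair p == t) : nat)%:R
  = if in_box t then F t else 0.
Proof.
have delta0 p : idx_pair p != t -> F (idx_pair p) * ((idx_pair p == t) : nat)%:R = 0.
  by move/negbTE => ->; rewrite mulr0.
case: ifP => [|t_out]; last first.
  by apply: big1 => p _; apply: delta0; apply: contraFneq t_out => <-; apply: idx_pair_in_box.
case: t delta0 => a b delta0 /andP[lt_a le_ba].
pose p0 : gr2_index n := exist _ (Ordinal lt_a, Ordinal (leq_ltn_trans le_ba lt_a)) le_ba.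
rewrite (bigD1 p0) //= big1 ?addr0 => [|p p_neq]; first by rewrite eqxx mulr1.
by apply: delta0; rewrite -[(a, b)]/(idx_pair p0) (inj_eq idx_pair_inj).
Qed.

Lemma sum_idx_pair_delta_if (R : pzSemiRingType) (c : bool) (F : nat * nat -> R) t :
  \sum_(p : gr2_index n) F (idx_pair p) * ((c && (idx_pair p == t)) : nat)%:R
  = if c then (if in_box t then F t else 0) else 0.
Proof.
case: c; first exact: sum_idx_pair_delta.
by rewrite big1 // => p _; rewrite mulr0.
Qed.

Variables x y : algC.
Hypotheses (xn : x ^+ n = -1) (yn : y ^+ n = -1).

Definition alt (t : nat * nat) := x ^+ t.1.+1 * y ^+ t.2 - x ^+ t.2 * y ^+ t.1.+1.

Definition alt_box t := if in_box t then alt t else 0.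

Definition alt_row : 'rV[algC]_#|gr2_index n| := \row_k alt (idx_pair (enum_val k)).

Lemma alt_pieri a b : (x + y) * alt (a, b) = alt (a.+1, b) + alt (a, b.+1).
Proof. by rewrite /alt /= !exprS; ring. Qed.

Lemma alt_diag a : alt (a, a.+1) = 0.
Proof. by rewrite /alt /=; ring. Qed.

Lemma alt_top b : alt (n.-1, b) = if (0 < b)%N then alt (b.-1, 0%N) else 0.
Proof.
rewrite /alt /= prednK ?(ltnW n_gt1) // xn yn.
by case: b => [|b] /=; rewrite ?expr0; ring.
Qed.

Lemma alt_box_right a b : in_box (a, b) -> alt_box (a, b.+1) = alt (a, b.+1).
Proof.
rewrite /alt_box /in_box /= => /andP[-> le_ba] /=.
by case: ltngtP le_ba => // -> _; rewrite alt_diag.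
Qed.

Lemma alt_box_up a b : in_box (a, b) ->
  alt_box (a.+1, b) + (if (a == n - 2)%N && (0 < b)%N then alt_box (b.-1, 0%N) else 0)
  = alt (a.+1, b).
Proof.
rewrite /alt_box /in_box /= => /andP[lt_a le_ba].
case: ltnP => [lt_a1|ge_a1] /=.
  by rewrite (leqW le_ba) (_ : (a == n - 2)%N = false) ?addr0 //; lia.
have a_top : a.+1 = n.-1 by lia.
rewrite add0r (_ : a == n - 2)%N ?a_top ?alt_top /=; last by lia.
by case: posnP => //= b_gt0; rewrite (_ : b.-1 < n.-1)%N //; lia.
Qed.

Lemma alt_row_sigma1 : alt_row *m sigma1_mat n = (x + y) *: alt_row.
Proof.
apply/rowP => j; rewrite !mxE.
pose F (p : gr2_index n) := alt (idx_pair p) * (qmonk2 n (idx_pair (enum_val j)) (idx_pair p))%:R.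
transitivity (\sum_(p : gr2_index n) F p).
  by rewrite [RHS](big_enum_val F); apply: eq_bigr => k _; rewrite !mxE.
rewrite {}/F.
have := idx_pair_in_box (enum_val j); case: (idx_pair _) => a b ab_in.
rewrite alt_pieri -(alt_box_up ab_in) -(alt_box_right ab_in) /qmonk2 /=.
under eq_bigr do rewrite !natrD !mulrDr andbA.
by rewrite !big_split /= sum_idx_pair_delta_if !sum_idx_pair_delta addrAC.
Qed.

Lemma eigenvalue_c1_alt : x != y -> eigenvalue (c1_mat n) (n%:R * (x + y)).
Proof.
move=> x_neq_y; apply/eigenvalueP; exists alt_row.
  by rewrite /c1_mat -scalemxAr alt_row_sigma1 scalerA.
have lt0n1 : (0 < n.-1)%N by lia.
pose p00 : gr2_index n := exist _ (Ordinal lt0n1, Ordinal lt0n1) (leqnn 0).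
apply/eqP => /rowP /(_ (enum_rank p00)); rewrite !mxE enum_rankK /alt /idx_pair /=.
by rewrite expr1 expr0 mulr1 mul1r => /eqP; rewrite subr_eq0 (negbTE x_neq_y).
Qed.

End AlternantEigenvector.

Definition c1_eig n (z : algC) (p : gr2_index n) : algC :=
  n%:R * (- z ^+ (idx_pair p).1.+1 - z ^+ (idx_pair p).2).

Section PrimitiveRoot.
Variables (n : nat) (z : algC).
Hypotheses (n_odd : odd n) (z_prim : n.-primitive_root z).

Lemma eigenvalue_c1_eig (p : gr2_index n) : eigenvalue (c1_mat n) (c1_eig z p).
Proof.
have /andP[lt_i le_ji] := idx_pair_in_box p.
have [n_gt1 lt_i1n lt_jn] : [/\ 1 < n, (idx_pair p).1.+1 < n & (idx_pair p).2 < n]%N.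
  by split; lia.
apply: eigenvalue_c1_alt; rewrite ?neg_prim_root_expr //.
by apply/eqP => /oppr_inj /(prim_root_expr_inj z_prim lt_i1n lt_jn); lia.
Qed.

Lemma neg_prim_root_pair_inj i j k l : (j < i < n)%N -> (l < k < n)%N ->
  - z ^+ i - z ^+ j = - z ^+ k - z ^+ l -> i = k /\ j = l.
Proof.
move=> /andP[lt_ji lt_in] /andP[lt_lk lt_kn] eq_sum.
have [lt_jn lt_ln] := (ltn_trans lt_ji lt_in, ltn_trans lt_lk lt_kn).
have root_neg t := neg_prim_root_expr t n_odd z_prim.
have expr_inj s t : (s < n)%N -> (t < n)%N -> - z ^+ s = - z ^+ t -> s = t.
  by move=> lt_sn lt_tn /oppr_inj; apply: prim_root_expr_inj z_prim lt_sn lt_tn.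
case: (pair_eq_of_sum_roots_neg1 n_odd (root_neg _) (root_neg _) (root_neg _) (root_neg _) eq_sum).
  by case=> eq1 eq2; rewrite (expr_inj _ _ lt_in lt_kn eq1) (expr_inj _ _ lt_jn lt_ln eq2).
by case=> eq1 eq2; have := expr_inj _ _ lt_in lt_ln eq1; have := expr_inj _ _ lt_jn lt_kn eq2; lia.
Qed.

Lemma c1_eig_inj : injective (@c1_eig n z).
Proof.
move=> p q /mulfI; rewrite pnatr_eq0 -lt0n (prim_order_gt0 z_prim) => /(_ isT) eq_pq.
apply: idx_pair_inj; move: eq_pq (idx_pair_in_box p) (idx_pair_in_box q); rewrite /in_box.
case: (idx_pair p) (idx_pair q) => [i j] [k l] /= eq_sum /andP[lt_i le_ji] /andP[lt_k le_lk].
have [lt_pair_p lt_pair_q] : (j < i.+1 < n)%N /\ (l < k.+1 < n)%N by lia.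
by have [[->] ->] := neg_prim_root_pair_inj lt_pair_p lt_pair_q eq_sum.
Qed.

End PrimitiveRoot.

Theorem lemma4p6 (n : nat) :
  (2 < n)%N -> odd n ->
  forall a : algC, eigenvalue (c1_mat n) a ->
    mup a (char_poly (c1_mat n)) = 1%N.
Proof.
move=> _ n_odd a; rewrite eigenvalue_root_char.
have [z z_prim] := C_prim_root_exists (odd_gt0 n_odd).
apply: (mup_eq1_uniq_roots (rs := map (c1_eig z) (enum (gr2_index n)))).
- exact: char_poly_monic.
- by rewrite size_char_poly size_map -cardE.
- by rewrite map_inj_uniq ?enum_uniq //; apply: c1_eig_inj.
- by apply/allP => _ /mapP[p _ ->]; rewrite -eigenvalue_root_char eigenvalue_c1_eig.
Qed.
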